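(* Let $0\le\sigma_1<\sigma_2\le1/2$, $0\le\varepsilon_1<\varepsilon_2\le1/2$, $q\in(0,1)$ and $Q=(1-q)\mathrm B(\sigma_1)+q\,\mathrm B(\sigma_2)\in\mathbb B_2^*$. There exists $p\in(0,1)$ such that $W=(1-p)\mathrm B(\varepsilon_1)+p\,\mathrm B(\varepsilon_2)$ is a 4-P-degradation of $Q$ if and only if $$\sigma_1\le\varepsilon_1<(1-q)\sigma_1+q\sigma_2<\varepsilon_2\le\sigma_2 .$$ In that case $p$ is the unique number with $(1-p)\varepsilon_1+p\varepsilon_2=(1-q)\sigma_1+q\sigma_2$.
   Context: A BIDMC $W$ has input uniform on $\{0,1\}$, discrete output alphabet $\mathcal Y$ and transition probabilities $\Pr(y\mid x)$; its LR-profile is $P_W(\varepsilon)=\Pr\big(\mathcal L_W(y)=\varepsilon/(1-\varepsilon)\big)$ with $\mathcal L_W(\hat y)=\Pr(y=\hat y\mid x=0)/\Pr(y=\hat y\mid x=1)$, and $W\cong W'$ if LR-profiles coincide. $W'\preccurlyeq W$ if there is a channel $T$ from the output alphabet of $W$ to that of $W'$ with $\Pr(y'\mid x'=a)=\sum_{y}\Pr(y\mid x=a)T(y'\mid y)$. $\mathrm B(\varepsilon)$ is the BSC with crossover probability $\varepsilon$; $\sum_iq_iW_i$ denotes the random switching channel (use $W_i$ with probability $q_i$ independently of the input and output the index $i$ along with the output). $\mathbb B_n$ is the set of BIDMCs equivalent to $\sum_{i\in[n]}p_i\mathrm B(\varepsilon_i)$ for a probability vector $(p_i)$ and $\varepsilon_i\in[0,1]$;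 $\mathbb B_n^*=\mathbb B_n\setminus\mathbb B_{n-1}$. $P_\epsilon(W)=\frac12\sum_{y}\min\{\Pr(y\mid x=0),\Pr(y\mid x=1)\}$. For a symmetric BIDMC $Q$ and $n\ge1$, $W$ is a $2n$-P-degradation of $Q$ if $W\in\mathbb B_n$, $W\preccurlyeq Q$ and $P_\epsilon(W)=\min\{P_\epsilon(W'):W'\in\mathbb B_n,\ W'\preccurlyeq Q\}$. *)

From HB Require Import structures.
From mathcomp Require Import all_boot all_order all_algebra.
From mathcomp Require Import reals.
Set Implicit Arguments. Unset Strict Implicit. Unset Printing Implicit Defensive.
Import Order.TTheory GRing.Theory Num.Theory.
Local Open Scope ring_scope.

(* A binary-input channel with finite output alphabet [out]; input 0 is
   [false], input 1 is [true]; [tr x y] = Pr(y | x). *)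
Record chan (R : realType) := Chan { out : finType; tr : bool -> out -> R }.
Arguments out {R} c.
Arguments tr {R} c _ _.

Section Defs.
Variable R : realType.

Definition valid (W : chan R) : Prop :=
  (forall x y, 0 <= tr W x y) /\ (forall x, \sum_(y : out W) tr W x y = 1).

(* LR-profile: P_W(e) = Pr(L_W(y) = e/(1-e)), y the output under uniform input,
   L_W(y) = Pr(y|0)/Pr(y|1); the equation L_W(y) = e/(1-e) is written in
   cross-multiplied form Pr(y|0)(1-e) = Pr(y|1) e (covering L = 0 and L = oo). *)
Definition LRprofile (W : chan R) (e : R) : R :=
  \sum_(y : out W | tr W false y * (1 - e) == tr W true y * e)
     (tr W false y + tr W true y) / 2.

Definition chan_equiv (W W' : chan R) : Prop :=
  forall e, 0 <= e <= 1 -> LRprofile W e = LRprofile W' e.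

Definition degraded (W' W : chan R) : Prop :=
  exists T : out W -> out W' -> R,
    [/\ forall y y', 0 <= T y y',
        forall y, \sum_(y' : out W') T y y' = 1 &
        forall a y', tr W' a y' = \sum_(y : out W) tr W a y * T y y'].

(* Random switching channel  sum_i p_i B(eps_i): output (index, BSC output). *)
Definition bsc_mix (n : nat) (p eps : 'I_n -> R) : chan R :=
  @Chan R (prod (ordinal n) bool)
    (fun x (iy : 'I_n * bool) =>
       p iy.1 * (if x == iy.2 then 1 - eps iy.1 else eps iy.1)).

Definition inB (n : nat) (W : chan R) : Prop :=
  valid W /\
  exists p eps : 'I_n -> R,
    [/\ forall i, 0 <= p i, \sum_i p i = 1,
        forall i, 0 <= eps i <= 1 & chan_equiv W (bsc_mix p eps)].

Definition Perr (W : chan R) : R :=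
  (1 / 2) * \sum_(y : out W) Num.min (tr W false y) (tr W true y).

(* W is a 2n-P-degradation of Q. *)
Definition PDeg (n : nat) (W Q : chan R) : Prop :=
  [/\ inB n W, degraded W Q &
      forall W', inB n W' -> degraded W' Q -> Perr W <= Perr W'].

Definition mix2 (a b t : R) : chan R :=
  @bsc_mix 2 (fun i => if val i == 0%N then 1 - t else t)
             (fun i => if val i == 0%N then a else b).
End Defs.

(* Data processing: min(Pr(y|0), Pr(y|1)) is concave, so P_e can only grow under
   degradation.  Since Q itself lies in B_2, a 4-P-degradation W of Q has
   P_e(W) = P_e(Q), i.e. (1-p) e1 + p e2 = (1-q) s1 + q s2.  Degradation cannot
   enlarge the likelihood-ratio range, which forces s1 <= e1; and when P_e is
   preserved the min-likelihood is additive along the kernel, so the bound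
   min <= s2 * (Pr(y|0) + Pr(y|1)) valid on Q transfers to W and forces e2 <= s2.
   Conversely, under these inequalities each component of W is a merge of parts of
   the two BSC components of Q, so W is a degradation of Q with the same P_e. *)
From HB Require Import structures.
From mathcomp Require Import all_boot all_order all_algebra.
From mathcomp Require Import reals.
From mathcomp Require Import ring lra.
Import Order.TTheory GRing.Theory Num.Theory.
Local Open Scope ring_scope.
Set Implicit Arguments. Unset Strict Implicit.

Section Degradation.
Variable R : realType.

Definition tr_min (W : chan R) (y : out W) : R :=
  Num.min (tr W false y) (tr W true y).
Arguments tr_min : clear implicits.

Lemma PerrE (W : chan R) : Perr W = 1 / 2 * \sum_y tr_min W y.
Proof. by []. Qed.

Lemma degraded_refl (W : chan R) : degraded W W.
Proof.
exists (fun y y' => (y == y')%:R); split.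
- by move=> y y'; rewrite ler0n.
- by move=> y; rewrite (bigD1 y) //= eqxx big1 ?addr0 // => y' /negbTE; rewrite eq_sym => ->.
- move=> a y'; rewrite (bigD1 y') //= eqxx mulr1 big1 ?addr0 //.
  by move=> y /negbTE ->; rewrite mulr0.
Qed.

Section Kernel.
Variables (W Q : chan R) (T : out Q -> out W -> R).
Hypotheses (T_ge0 : forall y y', 0 <= T y y')
           (T_sum1 : forall y, \sum_y' T y y' = 1)
           (trW : forall a y', tr W a y' = \sum_y tr Q a y * T y y').

Lemma lr_bound_kernel (a b : R) :
  (forall y, a * tr Q false y <= b * tr Q true y) ->
  forall y', a * tr W false y' <= b * tr W true y'.
Proof.
move=> lrQ y'; rewrite !trW !mulr_sumr; apply: ler_sum => y _.
by rewrite !mulrA ler_wpM2r.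
Qed.

Lemma tr_min_kernel_ge y' : \sum_y tr_min Q y * T y y' <= tr_min W y'.
Proof.
rewrite /tr_min !trW le_min; apply/andP; split; apply: ler_sum => y _;
  by rewrite ler_wpM2r // ge_min lexx ?orbT.
Qed.

Lemma sum_tr_min_kernel :
  \sum_y' \sum_y tr_min Q y * T y y' = \sum_y tr_min Q y.
Proof.
rewrite exchange_big; apply: eq_bigr => y _.
by rewrite -mulr_sumr T_sum1 mulr1.
Qed.

Lemma Perr_kernel_le : Perr Q <= Perr W.
Proof.
rewrite !PerrE -sum_tr_min_kernel ler_wpM2l ?divr_ge0 ?ler01 ?ler0n //.
by apply: ler_sum => y' _; apply: tr_min_kernel_ge.
Qed.

(* The slack [tr_min W y' - \sum_y tr_min Q y * T y y'] is nonnegative and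
   sums to [2 (Perr W - Perr Q)], so equal error probabilities force it to vanish. *)
Lemma tr_min_kernel_eq :
  Perr W <= Perr Q -> forall y', tr_min W y' = \sum_y tr_min Q y * T y y'.
Proof.
rewrite !PerrE ler_pM2l ?divr_gt0 ?ltr01 ?ltr0n // -sum_tr_min_kernel => le_sum.
have slack0 : \sum_y' (tr_min W y' - \sum_y tr_min Q y * T y y') = 0.
  apply/eqP; rewrite eq_le sumrB subr_le0 le_sum /=.
  by rewrite -sumrB sumr_ge0 // => y' _; rewrite subr_ge0 tr_min_kernel_ge.
move=> y'; apply/eqP; rewrite -subr_eq0; apply/eqP.
by apply: (psumr_eq0P _ slack0) => // z _; rewrite subr_ge0 tr_min_kernel_ge.
Qed.

Lemma tr_min_bound_kernel (c : R) :
  Perr W <= Perr Q ->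
  (forall y, tr_min Q y <= c * (tr Q false y + tr Q true y)) ->
  forall y', tr_min W y' <= c * (tr W false y' + tr W true y').
Proof.
move=> PWQ minQ y'; rewrite tr_min_kernel_eq // !trW -big_split /= mulr_sumr.
by apply: ler_sum => y _; rewrite -mulrDl mulrA ler_wpM2r.
Qed.

End Kernel.

Lemma Perr_degraded (W Q : chan R) : degraded W Q -> Perr Q <= Perr W.
Proof. by case=> T [T_ge0 T_sum1 trW]; apply: (Perr_kernel_le T_ge0). Qed.

Lemma PDeg_Perr_eq n (W Q : chan R) : PDeg n W Q -> inB n Q -> Perr W = Perr Q.
Proof.
case=> _ WQ Wmin BQ; apply/eqP.
by rewrite eq_le Wmin ?Perr_degraded //; apply: degraded_refl.
Qed.

Lemma PDeg_of_Perr_eq n (W Q : chan R) :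
  inB n W -> degraded W Q -> Perr W = Perr Q -> PDeg n W Q.
Proof. by move=> BW WQ PWQ; split=> // W' _ W'Q; rewrite PWQ Perr_degraded. Qed.

End Degradation.
Arguments tr_min {R} W y.

Section BscMix.
Variable R : realType.

Lemma sum_pair_bool n (F : 'I_n * bool -> R) :
  \sum_y F y = \sum_i (F (i, true) + F (i, false)).
Proof.
rewrite (eq_bigr (fun y => F (y.1, y.2))) => [|[] //].
rewrite -(pair_bigA _ (fun i b => F (i, b))).
by apply: eq_bigr => i _; rewrite big_bool.
Qed.

Variables (n : nat) (p eps : 'I_n -> R).

Lemma bsc_mix_degraded m (p' eps' : 'I_m -> R) (K : 'I_n -> 'I_m -> R) :
  (forall i j, 0 <= K i j) -> (forall i, \sum_j K i j = 1) ->
  (forall j, p' j = \sum_i p i * K i j) ->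
  (forall j, p' j * eps' j = \sum_i p i * K i j * eps i) ->
  degraded (bsc_mix p' eps') (bsc_mix p eps).
Proof.
move=> K_ge0 K_sum1 p'E peps'E.
exists (fun y y' => if y.2 == y'.2 then K y.1 y'.1 else 0); split.
- by move=> y y'; case: ifP.
- move=> [i b]; rewrite sum_pair_bool -(K_sum1 i).
  by apply: eq_bigr => j _; case: b; rewrite /= ?addr0 ?add0r.
- move=> a [j b']; rewrite sum_pair_bool /=.
  transitivity (\sum_i p i * K i j * (if a == b' then 1 - eps i else eps i)).
    case: eqP => _; last exact: peps'E.
    rewrite mulrBr mulr1 peps'E p'E -sumrB.
    by apply: eq_bigr => i _; ring.
  by apply: eq_bigr => i _; case: a; case: b' => /=; ring.
Qed.

Hypothesis p_ge0 : forall i, 0 <= p i.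

Lemma bsc_mix_inB :
  \sum_i p i = 1 -> (forall i, 0 <= eps i) -> (forall i, eps i <= 1) ->
  inB n (bsc_mix p eps).
Proof.
move=> p_sum1 eps_ge0 eps_le1; split; last first.
  by exists p, eps; split => // i; rewrite eps_ge0 eps_le1.
split.
- by move=> x [i b] /=; case: (x == b); rewrite mulr_ge0 ?subr_ge0.
- by move=> x; rewrite sum_pair_bool -p_sum1; apply: eq_bigr => i _; case: x => /=; ring.
Qed.

Lemma tr_min_bsc_mix :
  (forall i, eps i <= 1 / 2) -> forall y, tr_min (bsc_mix p eps) y = p y.1 * eps y.1.
Proof.
move=> eps_half [i b]; rewrite /tr_min /=.
have le_eps : p i * eps i <= p i * (1 - eps i).
  by rewrite ler_wpM2l //; move: (eps_half i); lra.
by case: b => /=; [rewrite min_l | rewrite min_r].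
Qed.

Lemma Perr_bsc_mix :
  (forall i, eps i <= 1 / 2) -> Perr (bsc_mix p eps) = \sum_i p i * eps i.
Proof.
move=> eps_half; rewrite PerrE (eq_bigr _ (fun y _ => tr_min_bsc_mix eps_half y)).
by rewrite sum_pair_bool mulr_sumr; apply: eq_bigr => i _ /=; field.
Qed.

Lemma bsc_mix_lr_bound (c : R) :
  (forall i, c <= eps i) -> (forall i, eps i <= 1 - c) ->
  forall y, c * tr (bsc_mix p eps) false y <= (1 - c) * tr (bsc_mix p eps) true y.
Proof.
move=> eps_ge eps_le [i b]; move: (eps_ge i) (eps_le i) (p_ge0 i).
by case: b => /=; nra.
Qed.

Lemma bsc_mix_tr_min_bound (c : R) :
  (forall i, eps i <= c) ->
  forall y, tr_min (bsc_mix p eps) y <=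
            c * (tr (bsc_mix p eps) false y + tr (bsc_mix p eps) true y).
Proof.
move=> eps_c [i b]; rewrite /tr_min /= ge_min; apply/orP.
by move: (eps_c i) (p_ge0 i); case: b => /= *; [left | right]; nra.
Qed.

End BscMix.

Section Mix2.
Variable R : realType.

Lemma forall_ord2 (P : 'I_2 -> Prop) : P ord0 -> P ord_max -> forall i, P i.
Proof. by move=> P0 P1 [[|[|i]] lti] //; [move: P0 | move: P1]; congr P; apply: val_inj. Qed.

Lemma sum_ord2 (F : 'I_2 -> R) : \sum_i F i = F ord0 + F ord_max.
Proof. by rewrite big_ord_recl big_ord1; congr (_ + F _); apply: val_inj. Qed.

Lemma mix2_inB (a b t : R) :
  0 <= a -> a <= 1 -> 0 <= b -> b <= 1 -> 0 <= t -> t <= 1 -> inB 2 (mix2 a b t).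
Proof.
move=> a_ge0 a_le1 b_ge0 b_le1 t_ge0 t_le1.
apply: bsc_mix_inB; try by apply: forall_ord2 => /=; rewrite ?subr_ge0.
by rewrite sum_ord2 /=; ring.
Qed.

Lemma Perr_mix2 (a b t : R) :
  a <= 1 / 2 -> b <= 1 / 2 -> 0 <= t -> t <= 1 -> Perr (mix2 a b t) = (1 - t) * a + t * b.
Proof.
move=> a_half b_half t_ge0 t_le1.
by rewrite Perr_bsc_mix ?sum_ord2 //; apply: forall_ord2 => /=; rewrite ?subr_ge0.
Qed.

(* The kernel keeps the BSC output and moves component i of Q to component j of W
   with probability K i j.  The weights [al], [be] send mass (1-q) al of B(s1) and
   q be of B(s2) to the first component, chosen so that this mass is 1 - p with
   crossover e1 ([mass0], [err0]); by the mean constraint the rest is p B(e2). *)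
Lemma mix2_degraded (s1 s2 e1 e2 q p : R) :
  s1 < s2 -> 0 < q -> q < 1 -> s1 <= e1 -> e1 <= e2 -> e2 <= s2 -> 0 <= p -> p <= 1 ->
  (1 - p) * e1 + p * e2 = (1 - q) * s1 + q * s2 ->
  degraded (mix2 e1 e2 p) (mix2 s1 s2 q).
Proof.
move=> lt_s q_gt0 q_lt1 le_s1e1 le_e le_e2s2 p_ge0 p_le1 mean_eq.
set al := (1 - p) * (s2 - e1) / ((1 - q) * (s2 - s1)).
set be := (1 - p) * (e1 - s1) / (q * (s2 - s1)).
have nz_s : s2 - s1 != 0 by rewrite subr_eq0 gt_eqF.
have nz_q : q != 0 by rewrite gt_eqF.
have nz_q1 : 1 - q != 0 by rewrite subr_eq0 eq_sym lt_eqF.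
have mass0 : (1 - q) * al + q * be = 1 - p by rewrite /al /be; field; apply/and3P.
have err0 : (1 - q) * al * s1 + q * be * s2 = (1 - p) * e1.
  by rewrite /al /be; field; apply/and3P.
have al01 : 0 <= al <= 1.
  by rewrite divr_ge0 ?ler_pdivrMr ?mul1r ?mulr_gt0 ?subr_gt0 ?mulr_ge0 ?subr_ge0 //=; nra.
have be01 : 0 <= be <= 1.
  by rewrite divr_ge0 ?ler_pdivrMr ?mul1r ?mulr_gt0 ?subr_gt0 ?mulr_ge0 ?subr_ge0 //=; nra.
apply: (bsc_mix_degraded (K := fun i j : 'I_2 =>
  if val i == 0%N then (if val j == 0%N then al else 1 - al)
  else (if val j == 0%N then be else 1 - be))).
- by apply: forall_ord2; apply: forall_ord2 => /=; lra.
- by apply: forall_ord2; rewrite sum_ord2 /=; ring.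
- by apply: forall_ord2; rewrite sum_ord2 /=; lra.
- by apply: forall_ord2; rewrite sum_ord2 /=; nra.
Qed.

End Mix2.

Lemma PDeg_mix2_necessary (R : realType) (s1 s2 e1 e2 q p : R) :
  0 <= s1 -> s1 < s2 -> s2 <= 1 / 2 -> 0 <= e1 -> e1 < e2 -> e2 <= 1 / 2 ->
  0 < q -> q < 1 -> 0 < p -> p < 1 ->
  PDeg 2 (mix2 e1 e2 p) (mix2 s1 s2 q) ->
  [/\ (1 - p) * e1 + p * e2 = (1 - q) * s1 + q * s2, s1 <= e1 & e2 <= s2].
Proof.
move=> s1_ge0 lt_s s2_half e1_ge0 lt_e e2_half q_gt0 q_lt1 p_gt0 p_lt1 WQ.
have PWQ : Perr (mix2 e1 e2 p) = Perr (mix2 s1 s2 q).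
  by apply: (PDeg_Perr_eq WQ); apply: mix2_inB; lra.
have PWQ_le : Perr (mix2 e1 e2 p) <= Perr (mix2 s1 s2 q) by rewrite PWQ.
case: WQ => _ [T [T_ge0 T_sum1 trW]] _; split.
- by rewrite -Perr_mix2 ?PWQ ?Perr_mix2 //; lra.
- have lrQ y : s1 * tr (mix2 s1 s2 q) false y <= (1 - s1) * tr (mix2 s1 s2 q) true y.
    by apply: bsc_mix_lr_bound; apply: forall_ord2 => /=; lra.
  by move: (lr_bound_kernel T_ge0 trW lrQ (ord0, false)) => /= lr; nra.
- have minQ y : tr_min (mix2 s1 s2 q) y <=
                s2 * (tr (mix2 s1 s2 q) false y + tr (mix2 s1 s2 q) true y).
    by apply: bsc_mix_tr_min_bound; apply: forall_ord2 => /=; lra.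
  move: (tr_min_bound_kernel T_ge0 T_sum1 trW PWQ_le minQ (ord_max, false)).
  by rewrite tr_min_bsc_mix /= => [min_le | |]; first nra; apply: forall_ord2 => /=; lra.
Qed.

Lemma PDeg_mix2_sufficient (R : realType) (s1 s2 e1 e2 q : R) :
  0 <= s1 -> s1 < s2 -> s2 <= 1 / 2 -> 0 < q -> q < 1 ->
  s1 <= e1 -> e1 < (1 - q) * s1 + q * s2 -> (1 - q) * s1 + q * s2 < e2 -> e2 <= s2 ->
  exists p : R, [/\ 0 < p, p < 1 & PDeg 2 (mix2 e1 e2 p) (mix2 s1 s2 q)].
Proof.
move=> s1_ge0 lt_s s2_half q_gt0 q_lt1 le_s1e1 lt_e1m lt_me2 le_e2s2.
have lt_e : e1 < e2 := lt_trans lt_e1m lt_me2.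
pose p := ((1 - q) * s1 + q * s2 - e1) / (e2 - e1).
have mean_eq : (1 - p) * e1 + p * e2 = (1 - q) * s1 + q * s2.
  by rewrite /p; field; rewrite subr_eq0 gt_eqF.
have p_gt0 : 0 < p by rewrite divr_gt0 // subr_gt0.
have p_lt1 : p < 1 by rewrite ltr_pdivrMr ?subr_gt0 // mul1r ltrD2r.
clearbody p; exists p; split => //; apply: PDeg_of_Perr_eq.
- by apply: mix2_inB; lra.
- by apply: mix2_degraded => //; lra.
- by rewrite !Perr_mix2 ?mean_eq //; lra.
Qed.

Theorem lemma5 (R : realType) (s1 s2 e1 e2 q : R) :
  0 <= s1 -> s1 < s2 -> s2 <= 1 / 2 ->
  0 <= e1 -> e1 < e2 -> e2 <= 1 / 2 ->
  0 < q -> q < 1 ->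
  ((exists p : R, [/\ 0 < p, p < 1 & PDeg 2 (mix2 e1 e2 p) (mix2 s1 s2 q)]) <->
   [/\ s1 <= e1, e1 < (1 - q) * s1 + q * s2,
       (1 - q) * s1 + q * s2 < e2 & e2 <= s2]) /\
  (forall p : R, 0 < p -> p < 1 -> PDeg 2 (mix2 e1 e2 p) (mix2 s1 s2 q) ->
     (1 - p) * e1 + p * e2 = (1 - q) * s1 + q * s2).
Proof.
move=> s1_ge0 lt_s s2_half e1_ge0 lt_e e2_half q_gt0 q_lt1.
have necessary p :=
  PDeg_mix2_necessary (p := p) s1_ge0 lt_s s2_half e1_ge0 lt_e e2_half q_gt0 q_lt1.
split; last by move=> p p_gt0 p_lt1 /(necessary p p_gt0 p_lt1) [].
split; last by case; apply: PDeg_mix2_sufficient.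
move=> [p [p_gt0 p_lt1 /(necessary p p_gt0 p_lt1) [mean_eq le_s1e1 le_e2s2]]].
rewrite -mean_eq; split => //; nra.
Qed.
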